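(* Let $\mathbf{x}_0$ be a random vector in $\mathbb{R}^n$ with distribution $p(\mathbf{x}_0)$, let $\mathcal E:\mathbb{R}^n\to\mathbb{R}^k$ be an encoder and set $\mathbf{z}_0=\mathcal E(\mathbf{x}_0)$. Let $\mathbf{y}$ be a measurement with conditional distribution $p(\mathbf{y}\mid\mathbf{x}_0)$, and for each time $t$ let $\mathbf{z}_t=\mathbf{z}_0+\sigma_t\boldsymbol{\epsilon}_t$ with $\boldsymbol{\epsilon}_t\sim\mathcal N(\mathbf{0},\mathbf{I})$, where, given $\mathbf{x}_0$, the variables $\mathbf{y}$ and the $\mathbf{z}_t$ for different $t$ are mutually conditionally independent (so $p(\mathbf{z}_t\mid\mathbf{x}_0)=p(\mathbf{z}_t\mid\mathbf{z}_0)=\mathcal N(\mathbf{z}_t;\mathcal E(\mathbf{x}_0),\sigma_t^2\mathbf{I})$). Fix times $t_1,t_2$ and a value of $\mathbf{y}$, and suppose $\mathbf{z}_{t_1}$ is sampled from the time-marginal $p(\mathbf{z}_{t_1}\mid\mathbf{y})$. Then: (i) if $\mathbf{x}_0\sim p(\mathbf{x}_0\mid\mathbf{z}_{t_1},\mathbf{y})$ and then $\mathbf{z}_{t_2}\sim\mathcal N(\mathcal E(\mathbf{x}_0),\sigma_{t_2}^2\mathbf{I})$, i.e. $\mathbf{z}_{t_2}\sim\mathbb E_{\mathbf{x}_0\sim p(\mathbf{x}_0\mid\mathbf{z}_{t_1},\mathbf{y})}[\mathcal N(\mathcal E(\mathbf{x}_0),\sigma_{t_2}^2\mathbf{I})]$,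 then $\mathbf{z}_{t_2}$ is distributed according to $p(\mathbf{z}_{t_2}\mid\mathbf{y})$; (ii) if $\mathbf{z}_0\sim p(\mathbf{z}_0\mid\mathbf{z}_{t_1},\mathbf{y})$ and then $\mathbf{z}_{t_2}\sim\mathcal N(\mathbf{z}_0,\sigma_{t_2}^2\mathbf{I})$, i.e. $\mathbf{z}_{t_2}\sim\mathbb E_{\mathbf{z}_0\sim p(\mathbf{z}_0\mid\mathbf{z}_{t_1},\mathbf{y})}[\mathcal N(\mathbf{z}_0,\sigma_{t_2}^2\mathbf{I})]$, then $\mathbf{z}_{t_2}$ is also distributed according to $p(\mathbf{z}_{t_2}\mid\mathbf{y})$.
   Context: $\sigma_t\ge 0$ is a noise schedule (noise standard deviation at time $t$); $\mathcal N(\mathbf{m},0\cdot\mathbf{I})$ is understood as the point mass at $\mathbf{m}$. This is the latent-diffusion setting: $\mathbf{z}_t$ is the latent code of clean data perturbed by Gaussian noise of variance $\sigma_t^2$. All conditional distributions $p(\cdot\mid\cdot)$ are those of the joint distribution just described; $p(\mathbf{z}_t\mid\mathbf{y})$ is the conditional law of $\mathbf{z}_t$ given $\mathbf{y}$. *)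

From HB Require Import structures.
From mathcomp Require Import all_boot all_order all_algebra.
From mathcomp Require Import all_classical all_reals all_analysis.
From mathcomp Require Import measurable_realfun.
Set Implicit Arguments.
Unset Strict Implicit.
Unset Printing Implicit Defensive.
Import Order.TTheory GRing.Theory Num.Theory.
Local Open Scope classical_set_scope.
Local Open Scope ring_scope.

(* Vectors of R^k are represented as k.-tuple R, which carries the product
   (Borel) sigma-algebra generated by the coordinate projections. *)
Definition vadd (R : realType) (k : nat) (a b : k.-tuple R) : k.-tuple R :=
  [tuple tnth a i + tnth b i | i < k].
Definition vscale (R : realType) (k : nat) (s : R) (a : k.-tuple R) : k.-tuple R :=
  [tuple s * tnth a i | i < k].

(* g is the standard Gaussian N(0, I) on R^k: the product of k copies of the
   standard normal law (characterized on measurable boxes, a generating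
   pi-system of the product sigma-algebra). *)
Definition std_gaussian (R : realType) (k : nat) (g : set (k.-tuple R) -> \bar R) :=
  forall B : 'I_k -> set R, (forall i, measurable (B i)) ->
    g [set e | forall i, B i (tnth e i)] = (\prod_(i < k) normal_prob 0 1 (B i))%E.

(* N(m, s^2 I)(B), as the law of m + s * eps with eps ~ g = N(0, I);
   for s = 0 this is the point mass at m. *)
Definition gaussN (R : realType) (k : nat) (g : set (k.-tuple R) -> \bar R)
  (m : k.-tuple R) (s : R) (B : set (k.-tuple R)) : \bar R :=
  g [set e | B (vadd m (vscale s e))].

(* kappa is (a version of) the conditional distribution of W given V under P:
   a (measurable) kernel such that P(V in C, W in B) = \int_C kappa v B dP_V(v). *)
Definition is_cond_law d (Omega : measurableType d) (R : realType)
  (P : probability Omega R) dV (TV : measurableType dV) dW (TW : measurableType dW)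
  (V : Omega -> TV) (W : Omega -> TW) (kappa : TV -> set TW -> \bar R) : Prop :=
  (forall B, measurable B -> measurable_fun [set: TV] (kappa^~ B)) /\
  (forall (C : set TV) (B : set TW), measurable C -> measurable B ->
     P (V @^-1` C `&` W @^-1` B) = (\int[pushforward P V]_(v in C) kappa v B)%E).

(* The latent-diffusion model: x0 ~ p(x0), y ~ kY x0 = p(y | x0), and given x0
   the variables y and (z_t)_t are mutually conditionally independent with
   z_t | x0 ~ N(Enc x0, sigma_t^2 I).  Stated as the disintegration of the
   joint law of (x0, y, z_t1, ..., z_tm) for every finite family of distinct
   times. *)
Definition latent_model d (Omega : measurableType d) (R : realType)
  (P : probability Omega R) (n k : nat) dY (TY : measurableType dY) (Tm : eqType)
  (sigma : Tm -> R) (X0 : Omega -> n.-tuple R) (Y : Omega -> TY)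
  (Z : Tm -> Omega -> k.-tuple R) (Enc : n.-tuple R -> k.-tuple R)
  (g : set (k.-tuple R) -> \bar R) (kY : n.-tuple R -> set TY -> \bar R) : Prop :=
  forall (s : seq Tm), uniq s ->
  forall (A : set (n.-tuple R)) (C : set TY) (B : Tm -> set (k.-tuple R)),
    measurable A -> measurable C -> (forall t, measurable (B t)) ->
    P (X0 @^-1` A `&` Y @^-1` C `&` [set w | forall t, t \in s -> B t (Z t w)])
    = (\int[pushforward P X0]_(x in A)
         (kY x C * \prod_(t <- s) gaussN g (Enc x) (sigma t) (B t)))%E.

From HB Require Import structures.
From mathcomp Require Import all_boot all_order all_algebra.
From mathcomp Require Import all_classical all_reals all_analysis.
From mathcomp Require Import measurable_realfun.
Import Order.TTheory GRing.Theory Num.Theory.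
Local Open Scope classical_set_scope.
Local Open Scope ring_scope.

(* Both parts are instances of a tower property of conditional laws: if q is
   the law of z given y, kap that of w given (z, y), and G is a kernel with
   P(y in C, z' in B) = E[1_C(y) G(w, B)] for all C and B, then the law of z'
   given y is y |-> \int q(y, dz) \int kap((z, y), dx) G(x, .).  For (i) take
   w = x0 and G(x) = N(Enc x, sigma_t2^2 I), for (ii) w = z0 = Enc x0 and
   G(z) = N(z, sigma_t2^2 I); in both cases the hypothesis on z' = z_t2 is the
   conditional independence of y and z_t2 given x0 in the latent model.
   The tower property is proved by disintegration: on {v in C} the joint law
   of (v, w) agrees with \int_C q(v, {x | (v, x) in .}) dP_V on rectangles,
   hence everywhere, so both integrate every nonnegative function alike. *)

Section mixture.
Local Open Scope ereal_scope.
Context d1 d2 (X : measurableType d1) (Z : measurableType d2) (R : realType).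
Variables (mu : {measure set X -> \bar R}) (c : X -> \bar R)
  (l : X -> {measure set Z -> \bar R}).
Hypotheses (c0 : forall x, 0 <= c x) (cfin : forall x, c x \is a fin_num).
Hypothesis mc : measurable_fun setT c.
Hypothesis ml : forall U, measurable U -> measurable_fun setT (l ^~ U).

Definition mixture (U : set Z) := \int[mu]_x (c x * l x U).

Let mixture0 : mixture set0 = 0.
Proof.
rewrite /mixture; under eq_integral do rewrite measure0 mule0.
exact: integral0.
Qed.

Let mixture_ge0 U : 0 <= mixture U.
Proof. by apply: integral_ge0 => x _; apply: mule_ge0. Qed.

Let mixture_sigma_additive : semi_sigma_additive mixture.
Proof.
move=> F mF tF mUF; rewrite [X in _ --> X](_ : _ = \sum_(n <oo) mixture (F n)).
  exact: is_cvg_nneseries.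
rewrite /mixture -integral_nneseries //; last 2 first.
- by move=> n; apply: emeasurable_funM => //; exact: ml.
- by move=> n x _; apply: mule_ge0.
apply: eq_integral => x _.
rewrite -(cvg_lim _ (measure_semi_sigma_additive _ mF tF mUF)) //.
by rewrite -[c x]fineK // -nneseriesZl.
Qed.

HB.instance Definition _ := isMeasure.Build _ _ _ mixture
  mixture0 mixture_ge0 mixture_sigma_additive.

Definition mixture_measure : {measure set Z -> \bar R} := mixture.

Variable nu : {measure set Z -> \bar R}.
Hypothesis nuE : forall U, measurable U -> nu U = mixture U.

Import HBNNSimple.

Let integral_mixture_nnsfun (h : {nnsfun Z >-> R}) :
  \int[nu]_z (h z)%:E = \int[mu]_x (c x * \int[l x]_z (h z)%:E).
Proof.
transitivity (\int[mu]_x (\sum_(r \in range h)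
    r%:E * (c x * l x (h @^-1` [set r])))); last first.
  apply: eq_integral => x _; rewrite integralT_nnsfun sintegralE ge0_mule_fsumr.
    by apply: eq_fsbigr => r _; rewrite muleCA.
  by move=> r; exact: nnsfun_mulemu_ge0.
rewrite ge0_integral_fsum //; last 2 first.
- by move=> r; apply/measurable_funeM/emeasurable_funM => //; exact: ml.
- move=> r x _; rewrite muleCA; apply: mule_ge0 => //.
  exact: nnsfun_mulemu_ge0.
rewrite integralT_nnsfun sintegralE; apply: eq_fsbigr => r /set_mem [z _ <-].
rewrite nuE // ge0_integralZl //.
- by apply: emeasurable_funM => //; exact: ml.
- by move=> x _; apply: mule_ge0.
- by rewrite lee_fin.
Qed.

Lemma integral_mixture f : (forall z, 0 <= f z) -> measurable_fun setT f ->
  \int[nu]_z f z = \int[mu]_x (c x * \int[l x]_z f z).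
Proof.
move=> f0 mf; pose f_ := nnsfun_approx measurableT mf.
have nd_f_ z : {homo (fun n => (f_ n z)%:E) : a b / (a <= b)%N >-> a <= b}.
  by move=> a b ab; rewrite lee_fin; exact/lefP/nd_nnsfun_approx.
have integral_lim (m : {measure set Z -> \bar R}) :
    \int[m]_z f z = limn (fun n => \int[m]_z (f_ n z)%:E).
  rewrite -monotone_convergence //.
  - apply: eq_integral => z _; apply/esym/cvg_lim => //.
    exact: cvg_nnsfun_approx.
  - by move=> n; exact/measurable_EFinP.
  - by move=> n z _; rewrite lee_fin.
have nd_integral x : {homo (fun n => \int[l x]_z (f_ n z)%:E) :
    a b / (a <= b)%N >-> a <= b}.
  move=> a b ab; apply: ge0_le_integral => //.
  - by move=> z _; rewrite lee_fin.
  - exact/measurable_EFinP.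
  - exact/measurable_EFinP.
  - by move=> z _; exact: nd_f_.
rewrite integral_lim; under eq_fun do rewrite integral_mixture_nnsfun.
rewrite -monotone_convergence //; last 3 first.
- move=> n; apply: emeasurable_funM => //.
  apply: measurable_fun_integral_kernel => //.
    by move=> z; rewrite lee_fin.
  exact/measurable_EFinP.
- move=> n x _; apply: mule_ge0 => //.
  by apply: integral_ge0 => z _; rewrite lee_fin.
- by move=> x _ a b ab; apply: lee_wpmul2l => //; exact: nd_integral.
apply: eq_integral => x _; rewrite integral_lim limeMl //.
exact: ereal_nondecreasing_is_cvgn.
Qed.

End mixture.

Arguments mixture {d1 d2 X Z R}.
Arguments mixture_measure {d1 d2 X Z R} mu c l c0 cfin mc ml.
Arguments integral_mixture {d1 d2 X Z R} mu {c l} c0 cfin mc ml {nu} nuE {f}.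

Section density.
Local Open Scope ereal_scope.
Context d (X : measurableType d) (R : realType).
Variables (mu nu : {measure set X -> \bar R}) (c : X -> \bar R).
Hypotheses (c0 : forall x, 0 <= c x) (cfin : forall x, c x \is a fin_num).
Hypothesis mc : measurable_fun setT c.
Hypothesis nuE : forall U, measurable U -> nu U = \int[mu]_(x in U) c x.

Lemma integral_density f : (forall x, 0 <= f x) -> measurable_fun setT f ->
  \int[nu]_x f x = \int[mu]_x (c x * f x).
Proof.
move=> f0 mf.
have mdirac U : measurable U ->
    measurable_fun setT ((fun x => \d_x : {measure set X -> \bar R}) ^~ U).
  move=> mU /=; under eq_fun do rewrite diracE.
  by apply/measurable_EFinP; exact: measurable_indic.
have nu_mixture U : measurable U -> nu U = mixture mu c (fun x => \d_x) U.
  move=> mU; rewrite nuE // integral_mkcond; apply: eq_integral => x _.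
  by rewrite /patch /= diracE; case: (x \in U); rewrite ?mule1 ?mule0.
rewrite (integral_mixture mu c0 cfin mc mdirac nu_mixture f0 mf).
by apply: eq_integral => x _; rewrite integral_dirac // diracT mul1e.
Qed.

End density.

Arguments integral_density {d X R} mu {nu c} c0 cfin mc nuE {f}.

(* pushforward m f is a measure only under measurable_fun setT f, which
   canonical structure inference cannot supply on its own. *)
Definition mpushforward d1 d2 (T1 : measurableType d1) (T2 : measurableType d2)
  (R : realType) (m : {measure set T1 -> \bar R}) (f : T1 -> T2)
  (mf : measurable_fun setT f) : {measure set T2 -> \bar R}.
Proof.
refine (pushforward m f : {measure set T2 -> \bar R}); exact: mf.
Defined.
Arguments mpushforward {d1 d2 T1 T2 R} m {f} mf.

Lemma mpushforwardE d1 d2 (T1 : measurableType d1) (T2 : measurableType d2)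
  (R : realType) (m : {measure set T1 -> \bar R}) (f : T1 -> T2)
  (mf : measurable_fun setT f) A : mpushforward m mf A = m (f @^-1` A).
Proof. by []. Qed.

Lemma ge0_integral_pushforward_mrestr d d' (T : measurableType d)
  (T' : measurableType d') (R : realType) (mu : {measure set T -> \bar R})
  (D : set T) (mD : measurable D) (V : T -> T') (mV : measurable_fun setT V)
  (F : T' -> \bar R) : (forall v, 0 <= F v)%E -> measurable_fun setT F ->
  (\int[mpushforward (mrestr mu mD) mV]_v F v = \int[mu]_(w in D) F (V w))%E.
Proof.
move=> F0 mF; rewrite ge0_integral_pushforward //= preimage_setT.
have D1_ge0 w : (0 <= (\1_D w)%:E :> \bar R)%E by rewrite lee_fin.
have mD1 : measurable_fun setT (fun w => (\1_D w)%:E : \bar R).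
  by apply/measurable_EFinP; exact: measurable_indic.
have restr_density U : measurable U ->
    mrestr mu mD U = (\int[mu]_(w in U) (\1_D w)%:E)%E.
  by move=> mU; rewrite integral_indic // setIC.
rewrite (integral_density mu D1_ge0 (fun=> erefl) mD1 restr_density
  (fun w => F0 (V w)) (measurableT_comp mF mV)).
rewrite [RHS]integral_mkcond epatch_indic; apply: eq_integral => w _ /=.
by rewrite muleC.
Qed.

Arguments ge0_integral_pushforward_mrestr {d d' T T' R} mu {D} mD {V} mV {F}.

Lemma measure_prod_unique d1 d2 (T1 : measurableType d1)
  (T2 : measurableType d2) (R : realType)
  (m1 m2 : {measure set (T1 * T2) -> \bar R}) : (m1 setT < +oo)%E ->
  (forall A B, measurable A -> measurable B -> m1 (A `*` B) = m2 (A `*` B)) ->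
  forall X, measurable X -> m1 X = m2 X.
Proof.
move=> m1oo m12.
pose C := [set A `*` B | A in @measurable _ T1 & B in @measurable _ T2].
have CI : setI_closed C.
  move=> _ _ [X1 mX1 [X2 mX2 <-]] [Y1 mY1 [Y2 mY2 <-]]; rewrite -setXI.
  exists (X1 `&` Y1); first exact: measurableI.
  by exists (X2 `&` Y2) => //; exact: measurableI.
move=> X mX; apply: (measure_unique C (fun=> setT)) => //.
- exact: measurable_prod_measurableType.
- by move=> _; exists setT => //; exists setT => //; rewrite setXTT.
- by rewrite bigcup_const.
- by move=> _ [A mA [B mB <-]]; exact: m12.
Qed.

Section cond_law.
Local Open Scope ereal_scope.
Context (R : realType) (dO : measure_display) (Omega : measurableType dO)
  (P : probability Omega R) (dV dW : measure_display)
  (TV : measurableType dV) (TW : measurableType dW)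
  (V : Omega -> TV) (W : Omega -> TW) (q : TV -> probability TW R).
Hypotheses (mV : measurable_fun setT V) (mW : measurable_fun setT W).
Hypothesis hq : is_cond_law P V W (fun v => q v).

Definition cond_law_kernel : TV -> {measure set TW -> \bar R} := fun v => q v.

HB.instance Definition _ := isKernel.Build _ _ TV TW R cond_law_kernel hq.1.

Let cond_law_kernel1 v : cond_law_kernel v setT = 1.
Proof. exact: probability_setT. Qed.

HB.instance Definition _ :=
  Kernel_isProbability.Build _ _ TV TW R cond_law_kernel cond_law_kernel1.

Lemma measurable_cond_law_integral (k : TV * TW -> \bar R) :
  (forall u, 0 <= k u) -> measurable_fun setT k ->
  measurable_fun setT (fun v => \int[q v]_x k (v, x)).
Proof. exact: measurable_fun_integral_finite_kernel cond_law_kernel. Qed.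

Let mVW : measurable_fun setT (fun w => (V w, W w)) :=
  measurable_fun_pair mV mW.
Let section_law v : {measure set (TV * TW) -> \bar R} :=
  mpushforward (q v) (pair1_measurable v).

Let measurable_section_law U : measurable U ->
  measurable_fun setT (section_law ^~ U).
Proof.
move=> mU; have -> : section_law ^~ U = fun v => \int[q v]_x (\1_U (v, x))%:E.
  apply/funext => v; rewrite integral_indic ?setIT //.
  by rewrite -[X in measurable X]setTI; exact: pair1_measurable.
apply: (measurable_cond_law_integral (fun u => (\1_U u)%:E)).
  by move=> u; rewrite lee_fin.
by apply/measurable_EFinP; exact: measurable_indic.
Qed.

Lemma cond_law_joint (C : set TV) (U : set (TV * TW)) :
  measurable C -> measurable U ->
  P ((fun w => (V w, W w)) @^-1` U `&` V @^-1` C)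
  = \int[pushforward P V]_(v in C) q v (pair v @^-1` U).
Proof.
move=> mC mU.
have mVC : measurable (V @^-1` C) by rewrite -[_ @^-1` _]setTI; exact: mV.
pose c v := (\1_C v)%:E : \bar R.
have mc : measurable_fun setT c.
  by apply/measurable_EFinP; exact: measurable_indic.
have c0 v : 0 <= c v by rewrite lee_fin.
pose nu := mixture_measure (mpushforward P mV) c section_law c0 (fun=> erefl)
  mc measurable_section_law.
transitivity (nu U); last first.
  rewrite integral_mkcond epatch_indic; apply: eq_integral => v _ /=.
  by rewrite muleC.
change (mpushforward (mrestr P mVC) mVW U = nu U).
apply: measure_prod_unique => //.
  rewrite mpushforwardE preimage_setT.
  by apply: le_lt_trans (probability_le1 P _) (ltry _); exact: measurableI.
move=> A B mA mB; rewrite mpushforwardE /mrestr /=.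
transitivity (P (V @^-1` (A `&` C) `&` W @^-1` B)).
  by congr (P _); apply/seteqP; split => w /=; tauto.
rewrite hq.2 //; last exact: measurableI.
rewrite integral_mkcond /mixture; apply: eq_integral => v _.
have pairE : pair v @^-1` (A `*` B) = if v \in A then B else set0.
  apply/seteqP; case: ifPn => [/set_mem vA|]; first by split => x /=; tauto.
  by rewrite notin_setE => vA; split => x /=; tauto.
rewrite /patch /c /section_law mpushforwardE pairE in_setI indicE.
by case: (v \in A); case: (v \in C); rewrite ?mul1e ?mul0e ?measure0.
Qed.

Lemma integral_cond_law (h : TV * TW -> \bar R) (C : set TV) :
  (forall u, 0 <= h u) -> measurable_fun setT h -> measurable C ->
  \int[P]_(w in V @^-1` C) h (V w, W w)
  = \int[pushforward P V]_(v in C) \int[q v]_x h (v, x).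
Proof.
move=> h0 mh mC.
have mVC : measurable (V @^-1` C) by rewrite -[_ @^-1` _]setTI; exact: mV.
have mc : measurable_fun setT (fun v => (\1_C v)%:E : \bar R).
  by apply/measurable_EFinP; exact: measurable_indic.
have c0 v : 0 <= (\1_C v)%:E :> \bar R by rewrite lee_fin.
transitivity (\int[mpushforward (mrestr P mVC) mVW]_u h u).
  by rewrite (ge0_integral_pushforward_mrestr P mVC mVW h0 mh).
have restr_mixture U : measurable U -> mpushforward (mrestr P mVC) mVW U
    = mixture (mpushforward P mV) (fun v => (\1_C v)%:E) section_law U.
  move=> mU.
  transitivity (P ((fun w => (V w, W w)) @^-1` U `&` V @^-1` C)); first by [].
  rewrite cond_law_joint // integral_mkcond epatch_indic.
  by apply: eq_integral => v _ /=; rewrite muleC.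
rewrite (integral_mixture _ c0 (fun=> erefl) mc measurable_section_law
  restr_mixture h0 mh).
rewrite [RHS]integral_mkcond epatch_indic; apply: eq_integral => v _ /=.
by rewrite muleC ge0_integral_pushforward.
Qed.

End cond_law.

Arguments measurable_cond_law_integral {R dO Omega P dV dW TV TW V W q} hq k.
Arguments integral_cond_law {R dO Omega P dV dW TV TW V W q} mV mW hq {h C}.

Section cond_law_comp.
Local Open Scope ereal_scope.
Context (R : realType) (dO : measure_display) (Omega : measurableType dO)
  (P : probability Omega R) (dY dZ dW : measure_display)
  (TY : measurableType dY) (TZ : measurableType dZ) (TW : measurableType dW)
  (Y : Omega -> TY) (Z : Omega -> TZ) (W : Omega -> TW)
  (q : TY -> probability TZ R) (kap : (TZ * TY)%type -> probability TW R).
Hypotheses (mY : measurable_fun setT Y) (mZ : measurable_fun setT Z)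
  (mW : measurable_fun setT W).
Hypothesis hq : is_cond_law P Y Z (fun y => q y).
Hypothesis hkap : is_cond_law P (fun w => (Z w, Y w)) W (fun zy => kap zy).

Lemma is_cond_law_comp dT (T : measurableType dT) (Z' : Omega -> T)
    (G : TW -> set T -> \bar R) :
  (forall x B, 0 <= G x B) ->
  (forall B, measurable B -> measurable_fun setT (G ^~ B)) ->
  (forall C B, measurable C -> measurable B ->
     P (Y @^-1` C `&` Z' @^-1` B) = \int[P]_(w in Y @^-1` C) G (W w) B) ->
  is_cond_law P Y Z' (fun y B => \int[q y]_z \int[kap (z, y)]_x G x B).
Proof.
move=> G0 mG hZ'.
have mZY : measurable_fun setT (fun w => (Z w, Y w)).
  exact: measurable_fun_pair.
have F0 B v : 0 <= \int[kap v]_x G x B by apply: integral_ge0.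
have mF B : measurable B -> measurable_fun setT (fun v => \int[kap v]_x G x B).
  move=> mB.
  apply: (measurable_cond_law_integral hkap (fun u => G u.2 B)) => //.
  exact: measurableT_comp (mG B mB) measurable_snd.
have mFswap B : measurable B ->
    measurable_fun setT (fun yz : TY * TZ => \int[kap (yz.2, yz.1)]_x G x B).
  by move=> mB; exact: (measurableT_comp (mF B mB) (@measurable_swap _ _ _ _)).
split=> [B mB|C B mC mB].
  exact: measurable_cond_law_integral hq
    (fun yz => \int[kap (yz.2, yz.1)]_x G x B) (fun _ => F0 B _) (mFswap B mB).
have mTC : measurable ([set: TZ] `*` C) by exact: measurableX.
have preimTC : (fun w => (Z w, Y w)) @^-1` ([set: TZ] `*` C) = Y @^-1` C.
  by apply/seteqP; split => w /=; [case|].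
rewrite hZ' // -preimTC.
have mGB : measurable_fun setT (fun u : (TZ * TY) * TW => G u.2 B).
  exact: measurableT_comp (mG B mB) measurable_snd.
rewrite (integral_cond_law mZY mW hkap (fun _ => G0 _ _) mGB mTC) /=.
rewrite ge0_integral_pushforward //; last first.
  by apply: measurable_funTS; exact: mF.
rewrite preimTC.
exact: (integral_cond_law mY mZ hq (fun _ => F0 B _) (mFswap B mB) mC).
Qed.

End cond_law_comp.

Arguments is_cond_law_comp {R dO Omega P dY dZ dW TY TZ TW Y Z W q kap}
  mY mZ mW hq hkap {dT T Z' G}.

Lemma measurable_gaussN (R : realType) (k : nat)
  (g : {sigma_finite_measure set (k.-tuple R) -> \bar R}) (s : R)
  (B : set (k.-tuple R)) : measurable B ->
  measurable_fun setT (fun m => gaussN g m s B).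
Proof.
move=> mB.
pose D := [set me : k.-tuple R * k.-tuple R | B (vadd me.1 (vscale s me.2))].
have mshift : measurable_fun setT
    (fun me : k.-tuple R * k.-tuple R => vadd me.1 (vscale s me.2)).
  apply/measurable_fun_tnthP => i.
  rewrite (_ : _ \o _ = fun me : k.-tuple R * k.-tuple R =>
     tnth me.1 i + s * tnth me.2 i); last first.
    by apply/funext => me /=; rewrite /vadd /vscale !tnth_mktuple.
  apply: measurable_funD.
    exact: measurableT_comp (measurable_tnth i) measurable_fst.
  apply: measurable_funM => //.
  exact: measurableT_comp (measurable_tnth i) measurable_snd.
have mD : measurable D by rewrite -[D]setTI; exact: mshift.
have := measurable_fun_xsection g mD.
congr measurable_fun; apply/funext => m /=.
rewrite /gaussN; congr (g _); apply/seteqP; split => e;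
  by rewrite /xsection /= inE.
Qed.

Arguments measurable_gaussN {R k} g s {B}.

Section latent_model.
Local Open Scope ereal_scope.
Context (R : realType) (n k : nat) (dO : measure_display)
  (Omega : measurableType dO) (P : probability Omega R) (dY : measure_display)
  (TY : measurableType dY) (Tm : eqType) (sigma : Tm -> R)
  (X0 : Omega -> n.-tuple R) (Y : Omega -> TY) (Z : Tm -> Omega -> k.-tuple R)
  (Enc : n.-tuple R -> k.-tuple R) (g : probability (k.-tuple R) R)
  (kY : n.-tuple R -> probability TY R).
Hypotheses (mX0 : measurable_fun setT X0) (mY : measurable_fun setT Y).
Hypothesis mEnc : measurable_fun setT Enc.
Hypothesis mkY :
  forall C, measurable C -> measurable_fun setT (fun x => kY x C).
Hypothesis hlat : latent_model P sigma X0 Y Z Enc g (fun x => kY x).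

Lemma latent_model_joint_law t C B : measurable C -> measurable B ->
  P (Y @^-1` C `&` Z t @^-1` B)
  = \int[P]_(w in Y @^-1` C) gaussN g (Enc (X0 w)) (sigma t) B.
Proof.
move=> mC mB.
have mYC : measurable (Y @^-1` C) by rewrite -[_ @^-1` _]setTI; exact: mY.
pose G x := gaussN g (Enc x) (sigma t) B.
have mG : measurable_fun setT G.
  exact: measurableT_comp (measurable_gaussN g (sigma t) mB) mEnc.
have kY_fin x : kY x C \is a fin_num.
  by rewrite ge0_fin_numE // (le_lt_trans (probability_le1 _ mC)) ?ltry.
have restr_density U : measurable U ->
    mpushforward (mrestr P mYC) mX0 U = \int[pushforward P X0]_(x in U) kY x C.
  move=> mU; rewrite mpushforwardE /mrestr.
  transitivity (P (X0 @^-1` U `&` Y @^-1` C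
                   `&` [set w | forall t', t' \in [::] -> setT (Z t' w)])).
    by congr (P _); apply/seteqP; split => w /=; tauto.
  rewrite (hlat [::] erefl U C (fun=> setT) mU mC (fun=> measurableT)).
  by under eq_integral do rewrite big_nil mule1.
transitivity (\int[mpushforward (mrestr P mYC) mX0]_x G x); last first.
  by rewrite (ge0_integral_pushforward_mrestr P mYC mX0
    (fun _ => measure_ge0 _ _) mG).
rewrite (integral_density (mpushforward P mX0) (fun _ => measure_ge0 _ _) kY_fin
  (mkY C mC) restr_density (fun _ => measure_ge0 _ _) mG).
transitivity (P (X0 @^-1` setT `&` Y @^-1` C
                 `&` [set w | forall t', t' \in [:: t] -> B (Z t' w)])).
  congr (P _); apply/seteqP; split => w /=.
    by move=> [Cw Bw]; split => // t'; rewrite mem_seq1 => /eqP ->.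
  by move=> [[_ Cw] Bw]; split => //; apply: Bw; rewrite mem_seq1.
rewrite (hlat [:: t] erefl setT C (fun=> B) measurableT mC (fun=> mB)).
by apply: eq_integral => x _; rewrite big_seq1.
Qed.

End latent_model.

Arguments latent_model_joint_law
  {R n k dO Omega P dY TY Tm sigma X0 Y Z Enc g kY}
  mX0 mY mEnc mkY hlat t {C B}.

Theorem proposition2 (R : realType) (n k : nat)
  (dO : measure_display) (Omega : measurableType dO) (P : probability Omega R)
  (dY : measure_display) (TY : measurableType dY) (Tm : eqType) (sigma : Tm -> R)
  (X0 : Omega -> n.-tuple R) (Y : Omega -> TY) (Z : Tm -> Omega -> k.-tuple R)
  (Enc : n.-tuple R -> k.-tuple R)
  (g : probability (k.-tuple R) R) (kY : n.-tuple R -> probability TY R)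
  (t1 t2 : Tm)
  (q1 : TY -> probability (k.-tuple R) R)
  (r : (k.-tuple R * TY)%type -> probability (n.-tuple R) R)
  (r0 : (k.-tuple R * TY)%type -> probability (k.-tuple R) R) :
  (forall t, 0 <= sigma t) ->
  measurable_fun setT X0 -> measurable_fun setT Y ->
  (forall t, measurable_fun setT (Z t)) -> measurable_fun setT Enc ->
  std_gaussian g ->
  (forall C, measurable C -> measurable_fun setT (fun x => kY x C)) ->
  latent_model P sigma X0 Y Z Enc g (fun x => kY x) ->
  (* q1 y = p(z_t1 | y) *)
  is_cond_law P Y (Z t1) (fun y => q1 y) ->
  (* r (z, y) = p(x0 | z_t1 = z, y) *)
  is_cond_law P (fun w => (Z t1 w, Y w)) X0 (fun zy => r zy) ->
  (* r0 (z, y) = p(z0 | z_t1 = z, y), with z0 = Enc x0 *)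
  is_cond_law P (fun w => (Z t1 w, Y w)) (fun w => Enc (X0 w)) (fun zy => r0 zy) ->
  (* (i) *)
  is_cond_law P Y (Z t2)
    (fun y B => \int[q1 y]_z1 \int[r (z1, y)]_x0 gaussN g (Enc x0) (sigma t2) B)%E
  /\
  (* (ii) *)
  is_cond_law P Y (Z t2)
    (fun y B => \int[q1 y]_z1 \int[r0 (z1, y)]_z0 gaussN g z0 (sigma t2) B)%E.
Proof.
move=> _ mX0 mY mZ mEnc _ mkY hlat hq1 hr hr0.
have joint := latent_model_joint_law mX0 mY mEnc mkY hlat t2.
have mgauss B :
    measurable B -> measurable_fun setT (fun z => gaussN g z (sigma t2) B).
  exact: measurable_gaussN.
split.
- apply: (is_cond_law_comp mY (mZ t1) mX0 hq1 hr
    (G := fun x B => gaussN g (Enc x) (sigma t2) B)) => // B mB.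
  exact: measurableT_comp (mgauss B mB) mEnc.
- exact: (is_cond_law_comp mY (mZ t1) (measurableT_comp mEnc mX0) hq1 hr0
    (G := fun z B => gaussN g z (sigma t2) B)).
Qed.
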